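(* Consider $N=3$ vehicles $Q_1,Q_2,Q_3$ in the setting described in the context, with safety levels $s_{ij}(t)=V_{ij}(x_{ij}(t))$ and the cooperative control strategy determined at each time by the mixed integer program with the reward coefficient matrix described in the context. If $s_{12}, s_{23}, s_{31} \ge 0$ at some time $t=t_0$, then this joint control strategy guarantees that $s_{12}, s_{23}, s_{31} \ge 0$ for all $t>t_0$.
   Context: There are $N$ vehicles $Q_i$ with dynamics $\dot x_i = f_i(x_i,u_i)$, $u_i\in\mathcal U_i$, $x_i\in\mathbb R^{n_i}$, where control functions $u_i(\cdot)\in\mathbb U_i$ are measurable and $f_i$ is uniformly continuous, bounded and Lipschitz in $x_i$ for fixed $u_i$. For each pair $i\neq j$ there is relative dynamics $\dot x_{ij}=g_{ij}(x_{ij},u_i,u_j)$ (with $g_{ij}$ uniformly continuous, bounded, Lipschitz in $x_{ij}$ for fixed controls) and a danger zone $\mathcal Z_{ij}$ of relative states, with $x_i\in\mathcal Z_{ij}\Leftrightarrow x_j\in\mathcal Z_{ji}$. The backward reachable set is $\mathcal R_{ij}(t)=\{x_{ij}: \forall u_i(\cdot)\in\mathbb U_i,\ \exists u_j(\cdot)\in\mathbb U_j$ such that the trajectory of the relative dynamics satisfies $x_{ij}(s)\in\mathcal Z_{ij}$ for some $s\in[0,t]\}$, represented by a value function $V_{ij}(t,\cdot)$ with $\mathcal R_{ij}(t)=\{x_{ij}:V_{ij}(t,x_{ij})\le 0\}$; write $V_{ij}(x_{ij})=\lim_{t\to\infty}V_{ij}(t,x_{ij})$. The pairwise optimal (safety)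 control $u_{ij}^*$ of $Q_i$ with respect to $Q_j$ is the control obtained from the gradient of $V_{ij}$, which guarantees $Q_i$ avoids $\mathcal Z_{ij}$ over an infinite horizon regardless of $Q_j$'s action whenever applied from a relative state outside $\{V_{ij}\le 0\}$. The safety level is $s_{ij}=V_{ij}(x_{ij})$. Fix a safety threshold $K>0$. At each time, a control logic matrix $U\in\{0,1\}^{N\times N}$ with entries $u_{ij}$ is chosen as an optimal solution of the mixed integer program: maximize $\sum_{i,j} c_{ij}u_{ij}$ subject to $u_{ij}+u_{ji}\le 1$ for all $i\ne j$, $\sum_j u_{ij}\le 1$ for all $i$, $u_{ij}\in\{0,1\}$. The reward coefficients are $c_{ii}=-\infty$; for $i\neq j$, $c_{ij}=-1$ if $s_{ij}>K$ and $c_{ij}=p_{ij}^2$ if $s_{ij}\le K$, where for $N=3$ the priority matrix is $P=(p_{ij})=\begin{bmatrix} * & 6 & 3\\ 2 & * & 5\\ 4 & 1 & *\end{bmatrix}$ (diagonal entries irrelevant). If $u_{ij}=1$, vehicle $Q_i$ executes the pairwise optimal control $u_{ij}^*$ to avoid $Q_j$. *)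

From HB Require Import structures.
From mathcomp Require Import all_boot all_order all_algebra.
From mathcomp Require Import all_classical all_reals all_analysis.
Set Implicit Arguments. Unset Strict Implicit. Unset Printing Implicit Defensive.
Import Order.TTheory GRing.Theory Num.Theory.
Import numFieldNormedType.Exports.
Local Open Scope ring_scope.

(* Vehicles Q_1,Q_2,Q_3 are indexed by 'I_3 = {0,1,2}: vehicle Q_k is index k-1. *)

Definition ctrl_logic := 'I_3 -> 'I_3 -> bool.

Definition mip_feasible (u : ctrl_logic) : Prop :=
  (forall i j : 'I_3, i != j -> ((u i j : nat) + (u j i : nat) <= 1)%N) /\
  (forall i : 'I_3, (\sum_(j < 3) (u i j : nat) <= 1)%N).

(* Objective sum_{i,j} c_ij u_ij, in the extended reals (c_ii = -oo),
   with the convention 0 * (-oo) = 0. *)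
Definition mip_objective (R : realType) (c : 'I_3 -> 'I_3 -> \bar R)
  (u : ctrl_logic) : \bar R :=
  (\sum_(i < 3) \sum_(j < 3) (if u i j then c i j else 0%E))%E.

Definition mip_optimal (R : realType) (c : 'I_3 -> 'I_3 -> \bar R)
  (u : ctrl_logic) : Prop :=
  mip_feasible u /\
  forall u' : ctrl_logic, mip_feasible u' ->
    (mip_objective c u' <= mip_objective c u)%E.

Definition prio (R : realType) (i j : 'I_3) : R :=
  match nat_of_ord i, nat_of_ord j with
  | 0, 1 => 6 | 0, 2 => 3
  | 1, 0 => 2 | 1, 2 => 5
  | 2, 0 => 4 | 2, 1 => 1
  | _, _ => 0
  end.

Definition reward (R : realType) (K : R) (s : 'I_3 -> 'I_3 -> R)
  (i j : 'I_3) : \bar R :=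
  if i == j then -oo%E
  else if K < s i j then (-1)%E
  else ((prio R i j) ^+ 2)%:E.

From HB Require Import structures.
From mathcomp Require Import all_boot all_order all_algebra.
From mathcomp Require Import all_classical all_reals all_analysis.
From mathcomp Require Import lra.
Import Order.TTheory GRing.Theory Num.Theory.
Import numFieldNormedType.Exports.
Local Open Scope classical_set_scope.
Local Open Scope ring_scope.

(* Let [j] be the successor of [i] in the cycle 0 -> 1 -> 2 -> 0 and [k] the
   third vehicle.  The priorities satisfy [p_ik^2 + p_ji^2 < p_ij^2], so when
   [s_ij <= K], reassigning [Q_i] to the single task of avoiding [Q_j] (and
   dropping the reverse task of [Q_j]) strictly increases the reward of any
   feasible logic matrix: every optimal matrix has [u_ij = 1].  Hence [Q_i]
   applies [u_ij^*] on every time interval where [s_ij <= K], which keeps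
   [s_ij] nonnegative there; outside these intervals [s_ij > K > 0].  If
   [s_ij(t) < 0], the last time [c <= t] with [s_ij(c) >= K] and a zero of
   [s_ij] in [(c, t)] (intermediate value theorem) yield a contradiction. *)

(* Ordinals with literal proofs, so that comparisons between them compute. *)
Definition o0 : 'I_3 := @Ordinal 3 0 isT.
Definition o1 : 'I_3 := @Ordinal 3 1 isT.
Definition o2 : 'I_3 := @Ordinal 3 2 isT.

Lemma ord3P (i : 'I_3) : [\/ i = o0, i = o1 | i = o2].
Proof.
by case: i => [[|[|[|//]]] ?]; [constructor 1 | constructor 2 | constructor 3];
  apply: val_inj.
Qed.

Lemma ordS_ord3 : [/\ ordS o0 = o1, ordS o1 = o2 & ordS o2 = o0].
Proof. by split; apply: val_inj. Qed.

Lemma ordS_neq (i : 'I_3) : i != ordS i.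
Proof. by have [S0 S1 S2] := ordS_ord3; case: (ord3P i) => ->; rewrite ?(S0, S1, S2). Qed.

Lemma big_ord3 (T : Type) (idx : T) (op : Monoid.law idx) (F : 'I_3 -> T) :
  \big[op/idx]_(j < 3) F j = op (op (F o0) (F o1)) (F o2).
Proof.
rewrite !big_ord_recr big_ord0 /= Monoid.mul1m.
by congr (op (op (F _) (F _)) (F _)); apply: val_inj.
Qed.

Lemma prio_cycle_dominant (R : realType) (i : 'I_3) :
  prio R i (ordS (ordS i)) ^+ 2 + prio R (ordS i) i ^+ 2 < prio R i (ordS i) ^+ 2.
Proof. by case: i => [[|[|[|//]]] ?]; rewrite /prio /=; lra. Qed.

Definition activate (u : ctrl_logic) (i j : 'I_3) : ctrl_logic :=
  fun a b => if a == i then b == j else [&& a != b, (a, b) != (j, i) & u a b].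

Lemma activate_irrefl (u : ctrl_logic) (i j a : 'I_3) :
  i != j -> ~~ activate u i j a a.
Proof. by rewrite /activate => ij; case: eqP => [->|_]; rewrite ?ij ?eqxx. Qed.

Lemma activate_feasible (u : ctrl_logic) (i j : 'I_3) :
  mip_feasible u -> mip_feasible (activate u i j).
Proof.
have le_u a b : a != i -> (activate u i j a b <= u a b)%N.
  by rewrite /activate => /negbTE ->; case: (u a b); rewrite ?andbF ?leq_b1.
have row_i b : activate u i j i b = (b == j) by rewrite /activate eqxx.
have pair_i b : b != i -> (activate u i j i b + activate u i j b i <= 1)%N.
  move=> /negbTE bi; rewrite row_i /activate bi.
  by have [->|_] := eqVneq b j; rewrite ?eqxx ?andbF ?leq_b1.
case=> pair_u row_u; split => [a b|a].
- have [-> ib|ai ab] := eqVneq a i; first by rewrite pair_i // eq_sym.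
  have [->|bi] := eqVneq b i; first by rewrite addnC pair_i.
  exact: leq_trans (leq_add (le_u _ _ ai) (le_u _ _ bi)) (pair_u _ _ ab).
- have [->|ai] := eqVneq a i.
    by rewrite (bigD1 j) //= row_i eqxx big1 // => b /negbTE; rewrite row_i => ->.
  by apply: leq_trans (row_u a); apply: leq_sum => b _; apply: le_u.
Qed.

Section Objective.
Variables (R : realType) (K : R) (s : 'I_3 -> 'I_3 -> R).

Definition reward_fin (i j : 'I_3) : R :=
  if K < s i j then -1 else prio R i j ^+ 2.

Definition objective_fin (u : ctrl_logic) : R :=
  \sum_(i < 3) \sum_(j < 3) (if u i j && (i != j) then reward_fin i j else 0).

Lemma reward_offdiag (i j : 'I_3) : i != j -> reward K s i j = (reward_fin i j)%:E.
Proof. by rewrite /reward /reward_fin => /negbTE ->; case: ifP. Qed.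

Lemma mip_objective_le (u : ctrl_logic) :
  (mip_objective (reward K s) u <= (objective_fin u)%:E)%E.
Proof.
rewrite /mip_objective /objective_fin -sumEFin; apply: lee_sum => i _.
rewrite -sumEFin; apply: lee_sum => j _.
have [->|ij] := eqVneq i j.
  by rewrite /reward eqxx andbF; case: (u j j) => //; exact: leNye.
by rewrite andbT reward_offdiag //; case: (u i j).
Qed.

Lemma mip_objective_irrefl (u : ctrl_logic) : (forall a, ~~ u a a) ->
  mip_objective (reward K s) u = (objective_fin u)%:E.
Proof.
move=> u_irr; rewrite /mip_objective /objective_fin -sumEFin; apply: eq_bigr => i _.
rewrite -sumEFin; apply: eq_bigr => j _.
have [->|ij] := eqVneq i j; first by rewrite (negbTE (u_irr j)).
by rewrite andbT reward_offdiag //; case: (u i j).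
Qed.

Lemma chosen_reward_le (b : bool) (i j : 'I_3) :
  (if b then reward_fin i j else 0) <= prio R i j ^+ 2.
Proof.
by rewrite /reward_fin; have := sqr_ge0 (prio R i j); case: b; [case: ifP => _ |]; lra.
Qed.

Lemma reward_fin_safe (i j : 'I_3) : s i j <= K -> reward_fin i j = prio R i j ^+ 2.
Proof. by rewrite /reward_fin ltNge => ->. Qed.

Lemma objective_fin_activate (u : ctrl_logic) (i : 'I_3) : ~~ u i (ordS i) ->
  objective_fin (activate u i (ordS i)) = objective_fin u + reward_fin i (ordS i)
    - (if u i (ordS (ordS i)) then reward_fin i (ordS (ordS i)) else 0)
    - (if u (ordS i) i then reward_fin (ordS i) i else 0).
Proof.
have [S0 S1 S2] := ordS_ord3.
case: (ord3P i) => ->; rewrite ?S0 ?S1 ?S2 ?S0 /objective_fin !big_ord3 /activate /=.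
all: by rewrite !andbT !andbF => /negbTE ->; lra.
Qed.

Lemma mip_optimal_cycle (u : ctrl_logic) (i : 'I_3) :
  mip_optimal (reward K s) u -> s i (ordS i) <= K -> u i (ordS i).
Proof.
move=> [u_feas u_opt] s_le_K; apply/negPn/negP => u_off.
have := u_opt _ (activate_feasible u i (ordS i) u_feas).
rewrite mip_objective_irrefl => [|a]; last exact/activate_irrefl/ordS_neq.
move/le_trans/(_ (mip_objective_le u)).
rewrite lee_fin objective_fin_activate // reward_fin_safe //.
have := prio_cycle_dominant R i.
have := chosen_reward_le (u i (ordS (ordS i))) i (ordS (ordS i)).
have := chosen_reward_le (u (ordS i) i) (ordS i) i.
lra.
Qed.

End Objective.

Lemma continuous_sup_ge (R : realType) (g : R -> R) (A : set R) (c : R) :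
  continuous g -> A !=set0 -> has_ubound A -> (forall x, A x -> c <= g x) ->
  c <= g (sup A).
Proof.
move=> g_cont A_ne A_ub A_ge.
have ge_closed : closed (g @^-1` [set y | c <= y]).
  by apply: preimage_closed => [x _|]; [exact: g_cont | exact: closed_ge].
have : closure A (sup A) := closure_sup A_ne A_ub.
by move/(closureS A_ge); rewrite -(closure_id _).1.
Qed.

Lemma nonneg_persists {R : realType} {K t0 : R} (g : R -> R) :
  0 < K -> continuous g ->
  (forall a b, t0 <= a -> a <= b -> (forall t, a <= t -> t <= b -> g t <= K) ->
     0 <= g a -> 0 <= g b) ->
  0 <= g t0 -> forall t, t0 <= t -> 0 <= g t.
Proof.
move=> K_gt0 g_cont propagate g_t0 t t0_t; rewrite leNgt; apply/negP => g_t.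
pose A := [set x | t0 <= x <= t /\ K < g x].
have [A_ne|A0] := pselect (A !=set0); last first.
  suff : 0 <= g t by lra.
  apply: propagate => // x t0_x x_t; rewrite leNgt; apply/negP => K_x.
  by apply: A0; exists x; split => //; apply/andP.
have A_ub : has_ubound A by exists t => x [/andP[]].
have A_le_sup : ubound A (sup A) := sup_upper_bound (conj A_ne A_ub).
have sup_le_t : sup A <= t by apply: ge_sup => // x [/andP[]].
have t0_le_sup : t0 <= sup A.
  by case: A_ne => x Ax; apply: le_trans (A_le_sup x Ax); case: Ax => /andP[].
have K_le_gsup : K <= g (sup A) by apply: continuous_sup_ge => // x [_ /ltW].
have [a] : exists2 a, a \in `[sup A, t] & g a = 0.
  apply: IVT => //; first exact: continuous_subspaceT.
  by rewrite ge_min le_max; apply/andP; split; [apply/orP; right | apply/orP; left]; lra.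
rewrite in_itv /= => /andP[sup_le_a a_le_t] g_a.
have sup_lt_a : sup A < a.
  by rewrite lt_neqAle sup_le_a andbT; apply: contraTneq K_le_gsup => ->; rewrite g_a -ltNge.
suff : 0 <= g t by lra.
apply: (propagate a) => //; last by rewrite g_a.
  exact: le_trans t0_le_sup sup_le_a.
move=> x a_x x_t; rewrite leNgt; apply/negP => K_x.
have : x <= sup A by apply: A_le_sup; split => //; apply/andP; split; lra.
lra.
Qed.

Theorem theorem1 (R : realType) (K : R) (t0 : R)
  (d : 'I_3 -> 'I_3 -> nat)                        (* dims of relative states x_ij *)
  (Ctrl : 'I_3 -> Type)                            (* control sets U_i *)
  (V : forall i j : 'I_3, 'rV[R]_(d i j) -> R)     (* value functions V_ij *)
  (ustar : forall i j : 'I_3, 'rV[R]_(d i j) -> Ctrl i) (* pairwise optimal controls u_ij^* *)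
  (xr : forall i j : 'I_3, R -> 'rV[R]_(d i j))    (* relative trajectories x_ij(t) *)
  (u : forall i : 'I_3, R -> Ctrl i)               (* applied controls u_i(t) *)
  (U : R -> ctrl_logic)                            (* control logic matrix at time t *)
  (HK : 0 < K)
  (HVcont : forall i j, continuous (V i j))
  (Hxcont : forall i j, continuous (xr i j))
  (* safety guarantee of the pairwise optimal control: while Q_i applies u_ij^*,
     whatever the other vehicles do, the safety level s_ij stays >= 0
     if it starts >= 0 *)
  (Hsafe : forall (i j : 'I_3) (a b : R), i != j -> t0 <= a -> a <= b ->
     (forall t, a <= t -> t <= b -> u i t = ustar i j (xr i j t)) ->
     0 <= V i j (xr i j a) -> 0 <= V i j (xr i j b))
  (* at each time, U is an optimal solution of the MIP with reward coefficients
     computed from the current safety levels s_ij(t) = V_ij(x_ij(t)) *)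
  (HU : forall t, t0 <= t ->
     mip_optimal (reward K (fun i j => V i j (xr i j t))) (U t))
  (* if u_ij = 1, Q_i executes the pairwise optimal control u_ij^* *)
  (Hexec : forall t (i j : 'I_3), t0 <= t -> U t i j ->
     u i t = ustar i j (xr i j t)) :
  let s := fun (i j : 'I_3) (t : R) => V i j (xr i j t) in
  0 <= s ord0 (inord 1) t0 -> 0 <= s (inord 1) (inord 2) t0 ->
  0 <= s (inord 2) ord0 t0 ->
  forall t, t0 < t ->
    [/\ 0 <= s ord0 (inord 1) t, 0 <= s (inord 1) (inord 2) t
      & 0 <= s (inord 2) ord0 t].
Proof.
move=> s s01 s12 s20 t t0_t.
have cycle_safe i : 0 <= s i (ordS i) t0 -> 0 <= s i (ordS i) t.
  move=> s_t0; apply: (nonneg_persists (s i (ordS i)) HK _ _ s_t0 t (ltW t0_t)).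
    by move=> x; apply: continuous_comp; [exact: Hxcont | exact: HVcont].
  move=> a b t0_a a_b s_le_K.
  apply: (Hsafe _ _ _ _ (ordS_neq i) t0_a a_b) => tau a_tau tau_b.
  have t0_tau : t0 <= tau := le_trans t0_a a_tau.
  apply: (Hexec _ _ _ t0_tau); apply: mip_optimal_cycle; first exact: HU.
  exact: s_le_K.
have [S0 S1 S2] := ordS_ord3.
have e0 : ord0 = o0 by apply: val_inj.
have e1 : inord 1 = o1 by apply: val_inj; rewrite /= inordK.
have e2 : inord 2 = o2 by apply: val_inj; rewrite /= inordK.
rewrite e0 e1 e2 in s01 s12 s20 *.
by split; [rewrite -S0 | rewrite -S1 | rewrite -S2]; apply: cycle_safe; rewrite ?(S0, S1, S2).
Qed.
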